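(* Let $n\ge 5$, $k\ge 1$, and $0\le h\le n$. Let $\mathcal{G}^4_{n,h}$ be a graph obtained from $\mathcal{G}^4_n$ by deleting any $h$ of the $n$ links of the form $\{i,i+2 \pmod n\}$. Then $$\lceil h/2\rceil \;\le\; M^{\mathcal{G}^4_{n,h}}_{k,n}\;\le\; 2M^C_{k,\lceil n/2\rceil}+h+2 .$$
   Context: $\mathcal{G}^4_n$ is the graph on $\{1,\dots,n\}$ in which each node $i$ is adjacent to $i\pm1$ and $i\pm2\pmod n$. For a graph $G$ on $\{1,\dots,n\}$, a measurement matrix for $G$ is a matrix $A\in\{0,1\}^{m\times n}$ in which every nonzero row has a support that induces a connected subgraph of $G$. A vector is $k$-sparse if it has at most $k$ nonzero entries. $A$ identifies all $k$-sparse vectors if $Ax_1\ne Ax_2$ for every two distinct $k$-sparse $x_1,x_2\in\mathbb{R}^n$. $M^G_{k,n}$ is the minimum number of rows of a measurement matrix for $G$ that identifies all $k$-sparse vectors. $M^C_{k,N}$ is the minimum number of rows of an arbitrary $0$-$1$ matrix with $N$ columns that identifies all $k$-sparse vectors in $\mathbb{R}^N$. *)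

From HB Require Import structures.
From mathcomp Require Import all_boot all_order all_algebra.
From Stdlib Require Import ClassicalEpsilon.
Set Implicit Arguments. Unset Strict Implicit. Unset Printing Implicit Defensive.
Import Order.TTheory GRing.Theory Num.Theory.
Local Open Scope ring_scope.

(* Nodes {1,...,n} are represented by 'I_n = {0,...,n-1}. *)

(* The graph G^4_n with the links {i, i+2 mod n} for i in D removed
   (D is the set of deleted "distance-2" links, indexed by their first
   endpoint i). *)
Definition G4del (n : nat) (D : {set 'I_n}) : rel 'I_n :=
  fun i j =>
    [|| (val j == (val i + 1) %% n)%N, (val i == (val j + 1) %% n)%N,
        ((val j == (val i + 2) %% n)%N && (i \notin D))
      | ((val i == (val j + 2) %% n)%N && (j \notin D))].

Definition ksparse (R : nzRingType) (n k : nat) (x : 'cV[R]_n) : Prop :=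
  leq #|[set j : 'I_n | x j ord0 != 0]| k.

Definition identifies (R : nzRingType) (m n k : nat) (A : 'M[R]_(m, n)) : Prop :=
  forall x1 x2 : 'cV[R]_n, ksparse k x1 -> ksparse k x2 -> x1 != x2 ->
    A *m x1 != A *m x2.

Definition zero_one (R : nzRingType) (m n : nat) (A : 'M[R]_(m, n)) : Prop :=
  forall i j, A i j = 0 \/ A i j = 1.

Definition row_support (R : nzRingType) (m n : nat) (A : 'M[R]_(m, n)) (i : 'I_m)
  : {set 'I_n} := [set j | A i j != 0].

Definition induces_connected (n : nat) (e : rel 'I_n) (S : {set 'I_n}) : Prop :=
  forall x y, x \in S -> y \in S ->
    connect (fun u v => [&& e u v, u \in S & v \in S]) x y.

Definition measurement_matrix (R : nzRingType) (m n : nat) (e : rel 'I_n)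
  (A : 'M[R]_(m, n)) : Prop :=
  zero_one A /\
  forall i, row_support A i != set0 -> induces_connected e (row_support A i).

Definition bool_of (P : Prop) : bool :=
  if excluded_middle_informative P then true else false.

Definition MG_pred (R : nzRingType) (n : nat) (e : rel 'I_n) (k : nat) : pred nat :=
  fun m => bool_of (exists A : 'M[R]_(m, n), measurement_matrix e A /\ identifies k A).

Definition MC_pred (R : nzRingType) (k N : nat) : pred nat :=
  fun m => bool_of (exists A : 'M[R]_(m, N), zero_one A /\ identifies k A).

Lemma bool_ofT (P : Prop) : P -> bool_of P.
Proof. by rewrite /bool_of; case: excluded_middle_informative. Qed.

Lemma id_zero_one (R : nzRingType) n : zero_one (1%:M : 'M[R]_n).
Proof. by move=> i j; rewrite mxE; case: (i == j); [right|left]. Qed.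

Lemma id_identifies (R : nzRingType) n k : identifies k (1%:M : 'M[R]_n).
Proof. by move=> x1 x2 _ _; rewrite !mul1mx. Qed.

Lemma MG_exists (R : nzRingType) (n : nat) (e : rel 'I_n) k :
  exists m, MG_pred R e k m.
Proof.
exists n; apply: bool_ofT; exists 1%:M; split; last exact: id_identifies.
split; first exact: id_zero_one.
move=> i _ x y; rewrite !inE !mxE.
case: (eqVneq i x) => [<-|]; last by rewrite eqxx.
case: (eqVneq i y) => [<-|]; last by rewrite eqxx.
by rewrite connect0.
Qed.

Lemma MC_exists (R : nzRingType) k N : exists m, MC_pred R k N m.
Proof.
exists N; apply: bool_ofT; exists 1%:M; split;
  [exact: id_zero_one | exact: id_identifies].
Qed.

Definition MG (R : nzRingType) (n : nat) (e : rel 'I_n) (k : nat) : nat :=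
  ex_minn (MG_exists R e k).

Definition MC (R : nzRingType) (k N : nat) : nat := ex_minn (MC_exists R k N).

From HB Require Import structures.
From mathcomp Require Import all_boot all_order all_algebra.
From mathcomp Require Import zify.
From Stdlib Require Import ClassicalEpsilon.
Set Implicit Arguments. Unset Strict Implicit. Unset Printing Implicit Defensive.
Import GRing.Theory.

(* Nodes are 'I_n and the link {i, i+2} is deleted iff i \in D.  Call i+1 the
   "center" of that deleted link; there are h centers.

   Cutting the cycle at two distinct centers x, y leaves two arcs
   and no surviving link joins them (the only link jumping over a center is the
   deleted one), so a connected support avoiding x and y lies on one arc.
   Going around the cycle, call a center c a transition of a support S when c
   and the next center disagree on membership in S.  Interleaving the cyclic
   order shows that a connected S has at most two transitions.  An identifying
   matrix has pairwise distinct columns, so every center is a transition of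
   some row; hence h <= 2m.

   Split the nodes by parity; in each class the nodes j are
   indexed by j/2 < ceil(n/2).  From an arbitrary 0-1 matrix B identifying
   k-sparse vectors of length ceil(n/2) we build rows "other parity class +
   centers + the nodes of this parity selected by a row of B": such sets are
   connected (a deleted link {i,i+2} is bypassed through its center i+1).  Two
   rows "other parity + centers" and one singleton row per center let us
   subtract the extra nodes and recover B applied to each parity half. *)

Definition cdist (n x u : nat) : nat := if x <= u then u - x else u + n - x.

Lemma add_mod_small n u d : u < n -> d <= n ->
  (u + d) %% n = if u + d < n then u + d else u + d - n.
Proof.
move=> un dn; case: ltnP => h; first by rewrite modn_small.
have -> : u + d = (u + d - n) + n by lia.
by rewrite modnDr modn_small; lia.
Qed.

Lemma arc_step n x y u d : 0 < d <= 2 -> 2 < n -> x < n -> y < n -> u < n ->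
  x != y -> u != x -> u != y -> (u + 1) %% n != x -> (u + 1) %% n != y ->
  (u + d) %% n != x -> (u + d) %% n != y ->
  (cdist n x u < cdist n x y) = (cdist n x ((u + d) %% n) < cdist n x y).
Proof.
move=> d12 n2 xn yn un; rewrite !add_mod_small //; try lia.
rewrite /cdist; do !case: ifP => ?; move=> *; apply/idP/idP => ?; lia.
Qed.

(* If, going clockwise, a is reached from x no later than y, and b is reached
   from y no later than x, then (all four being distinct where needed) the
   cyclic order is x a y b: the pair x, y separates a from b, and the pair
   a, b separates x from y. *)
Lemma interleave n x y a b : x < n -> y < n -> a < n -> b < n ->
  x != y -> a != x -> b != y -> a != y -> b != x ->
  cdist n x a <= cdist n x y -> cdist n y b <= cdist n y x ->
  [/\ a != b, (cdist n x a < cdist n x y) != (cdist n x b < cdist n x y)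
    & (cdist n a x < cdist n a b) != (cdist n a y < cdist n a b)].
Proof.
rewrite /cdist; do !case: ifP => ?; move=> *; split.
all: try (apply/negP; lia).
all: try lia.
all: try (apply/eqP; lia).
Qed.

Lemma G4del_sym n (D : {set 'I_n}) : symmetric (G4del D).
Proof. by move=> i j; rewrite /G4del orbCA [X in _ || (_ || X)]orbC. Qed.

Section Centers.
Variables (n : nat) (D : {set 'I_n}).

Definition centers : {set 'I_n} := [set ordS i | i in D].

Lemma card_centers : #|centers| = #|D|.
Proof. by rewrite card_imset //; exact: ordS_inj. Qed.

Lemma jump_avoids_centers (u c : 'I_n) :
  u \notin D -> c \in centers -> val c != (u + 1) %% n.
Proof.
move=> uD /imsetP[i iD ->]; apply: contraNneq uD => e.
suff -> : u = i by [].
by apply/ordS_inj/val_inj; rewrite /= -addn1 -e.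
Qed.

Definition before (x y u : 'I_n) : bool := cdist n x u < cdist n x y.

Hypothesis n_gt2 : 2 < n.

Lemma step_before (x y u v : 'I_n) : x \in centers -> y \in centers -> x != y ->
  u != x -> u != y -> v != x -> v != y ->
  val v = (u + 1) %% n \/ (val v = (u + 2) %% n /\ u \notin D) ->
  before x y u = before x y v.
Proof.
move=> xC yC xy ux uy vx vy [] e; rewrite /before.
- by rewrite e; apply: arc_step; rewrite -?e.
- case: e => e uD; rewrite e; apply: arc_step; rewrite -?e //.
  + by rewrite eq_sym; apply: jump_avoids_centers.
  + by rewrite eq_sym; apply: jump_avoids_centers.
Qed.

Lemma edge_before (x y u v : 'I_n) : x \in centers -> y \in centers -> x != y ->
  u != x -> u != y -> v != x -> v != y -> G4del D u v ->
  before x y u = before x y v.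
Proof.
move=> xC yC xy ux uy vx vy.
case/or4P => [/eqP e|/eqP e|/andP[/eqP e uD]|/andP[/eqP e vD]].
- by apply: step_before => //; left.
- by symmetry; apply: step_before => //; left.
- by apply: step_before => //; right.
- by symmetry; apply: step_before => //; right.
Qed.

Lemma connected_before (S : {set 'I_n}) (x y a b : 'I_n) :
  induces_connected (G4del D) S -> x \in centers -> y \in centers -> x != y ->
  x \notin S -> y \notin S -> a \in S -> b \in S -> before x y a = before x y b.
Proof.
move=> conn xC yC xy xS yS aS bS; have /connectP[p pth ->] := conn a b aS bS.
have avoid w : w \in S -> (w != x) && (w != y).
  by move=> wS; apply/andP; split; apply: contraTneq wS => ->.
elim: p a aS pth => [|w p IH] a aS //= /andP[/and3P[e _ wS] pth].
have /andP[ax ay] := avoid a aS; have /andP[wx wy] := avoid w wS.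
by rewrite (edge_before xC yC xy ax ay wx wy e); apply: IH.
Qed.

Section Transitions.
Hypothesis centers_gt1 : 1 < #|centers|.

(* Some center other than c, used as a default for the minimisation below. *)
Definition other_center (c : 'I_n) : 'I_n := odflt c [pick c' in centers :\ c].

Definition next_center (c : 'I_n) : 'I_n :=
  [arg min_(c' < other_center c in centers :\ c) cdist n c c'].

Lemma next_centerP c : c \in centers ->
  [/\ next_center c \in centers, next_center c != c &
   forall c', c' \in centers -> c' != c -> cdist n c (next_center c) <= cdist n c c'].
Proof.
move=> cC; have other_in : other_center c \in centers :\ c.
  rewrite /other_center; case: pickP => [//|none].
  have : 0 < #|centers :\ c| by move: centers_gt1; rewrite (cardsD1 c) cC.
  by rewrite card_gt0 => /set0Pn[z]; rewrite none.
rewrite /next_center; case: arg_minnP => // s; rewrite !inE => /andP[sc sC] smin.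
by split=> // c' c'C c'c; apply: smin; rewrite !inE c'c c'C.
Qed.

Definition transitions (S : {set 'I_n}) : {set 'I_n} :=
  [set c in centers | (c \in S) != (next_center c \in S)].

(* Two transitions of a connected set are one inside and one outside of it:
   otherwise the two transitions together with their successors interleave,
   and a pair of centers outside the set separates two of its points. *)
Lemma transitions_disagree (S : {set 'I_n}) c c' : induces_connected (G4del D) S ->
  c \in transitions S -> c' \in transitions S -> c != c' -> (c \in S) != (c' \in S).
Proof.
move=> conn /setIdP[cC tc] /setIdP[c'C tc'] cc'; apply/negP => /eqP same.
have [sC sc smin] := next_centerP cC; have [s'C s'c' s'min] := next_centerP c'C.
set s := next_center c in sC sc smin tc; set s' := next_center c' in s'C s'c' s'min tc'.
have val_neq (u v : 'I_n) : u != v -> val u != val v by [].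
have neq_S (u v : 'I_n) : (u \in S) != (v \in S) -> u != v.
  by apply: contraNneq => ->.
have c'c : c' != c by rewrite eq_sym.
have sc' : s != c' by rewrite eq_sym neq_S // -same.
have s'c : s' != c by rewrite eq_sym neq_S // same.
have [ss' sep_s sep_c] := interleave (ltn_ord c) (ltn_ord c') (ltn_ord s) (ltn_ord s')
  (val_neq _ _ cc') (val_neq _ _ sc) (val_neq _ _ s'c') (val_neq _ _ sc')
  (val_neq _ _ s'c) (smin c' c'C c'c) (s'min c cC cc').
case cS: (c \in S) same tc tc' => same tc tc'.
- have c'S : c' \in S by rewrite -same.
  have sS : s \notin S by move: tc; case: (s \in S).
  have s'S : s' \notin S by move: tc'; rewrite c'S; case: (s' \in S).
  by move: sep_c; rewrite -/(before s s' c) -/(before s s' c')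
    (connected_before conn sC s'C ss' sS s'S cS c'S) eqxx.
- have c'S : c' \notin S by rewrite -same.
  have sS : s \in S by move: tc; case: (s \in S).
  have s'S : s' \in S by move: tc'; rewrite (negbTE c'S); case: (s' \in S).
  by move: sep_s; rewrite -/(before c c' s) -/(before c c' s')
    (connected_before conn cC c'C cc' (negbT cS) c'S sS s'S) eqxx.
Qed.

(* A connected set has at most two transitions (pigeonhole on membership). *)
Lemma card_transitions (S : {set 'I_n}) : induces_connected (G4del D) S ->
  #|transitions S| <= 2.
Proof.
move=> conn; rewrite leqNgt; apply/negP => /card_gt2P[c1 [c2 [c3 [[t1 t2 t3] [d12 d23 d31]]]]].
have := transitions_disagree conn t1 t2 d12; have := transitions_disagree conn t2 t3 d23.
have := transitions_disagree conn t3 t1 d31.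
by case: (c1 \in S); case: (c2 \in S); case: (c3 \in S).
Qed.
End Transitions.
End Centers.

Lemma card_bigcup_le (T : finType) m (F : 'I_m -> {set T}) :
  #|\bigcup_(r < m) F r| <= \sum_(r < m) #|F r|.
Proof.
elim: m F => [|m IH] F; first by rewrite !big_ord0 cards0.
rewrite !big_ord_recr /=; apply: leq_trans (leq_card_setU _ _).1 _.
by rewrite leq_add2r.
Qed.

(* A matrix identifying k-sparse vectors (k >= 1) has pairwise distinct
   columns: they are its images of the 1-sparse unit vectors. *)
Lemma identifying_distinct_columns (R : nzRingType) m n k (A : 'M[R]_(m, n)) :
  0 < k -> identifies k A -> forall j1 j2 : 'I_n, j1 != j2 -> exists r, A r j1 != A r j2.
Proof.
move=> k_gt0 idA j1 j2 j12.
have unit_sparse (j : 'I_n) : ksparse k (delta_mx j ord0 : 'cV[R]_n).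
  rewrite /ksparse (_ : [set _ | _] = [set j]) ?cards1 //.
  by apply/setP => i; rewrite !inE mxE eqxx andbT; case: (i == j); rewrite ?oner_eq0 ?eqxx.
have units_neq : delta_mx j1 ord0 != delta_mx j2 ord0 :> 'cV[R]_n.
  apply/negP => /eqP/matrixP/(_ j1 ord0); rewrite !mxE eqxx (negbTE j12) /=.
  by move/eqP; rewrite oner_eq0.
have := idA _ _ (unit_sparse j1) (unit_sparse j2) units_neq; rewrite -!colE.
case: (pickP (fun r => A r j1 != A r j2)) => [r neq|same]; first by exists r.
by case/negP; apply/eqP/matrixP => r z; rewrite !mxE; move/negbFE/eqP: (same r).
Qed.

Lemma transitions_cover (R : nzRingType) n (D : {set 'I_n}) m (A : 'M[R]_(m, n))
    (C_gt1 : 1 < #|centers D|) :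
  zero_one A -> (forall j1 j2 : 'I_n, j1 != j2 -> exists r, A r j1 != A r j2) ->
  centers D \subset \bigcup_(r < m) transitions D (row_support A r).
Proof.
move=> zoA distinct_cols; apply/subsetP => c cC.
have [sC sc _] := next_centerP C_gt1 cC.
have [r neq] := distinct_cols _ _ sc.
apply/bigcupP; exists r => //; rewrite inE cC !inE.
by case: (zoA r c) (zoA r (next_center D c)) neq => -> [->|->]; rewrite ?eqxx ?oner_eq0.
Qed.

(* Lower bound: an identifying measurement matrix for G^4_{n,h} has at
   least h/2 rows, since each row accounts for at most two centers. *)
Lemma lower_bound (R : nzRingType) n (D : {set 'I_n}) k m (A : 'M[R]_(m, n)) :
  2 < n -> 0 < k -> measurement_matrix (G4del D) A -> identifies k A ->
  #|D| <= 2 * m.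
Proof.
move=> n_gt2 k_gt0 [zoA connA] idA.
have distinct_cols := identifying_distinct_columns k_gt0 idA.
have m_gt0 : 0 < m.
  have n_gt0 : 0 < n by lia.
  have n_gt1 : 1 < n by lia.
  have [r _] := distinct_cols (Ordinal n_gt0) (Ordinal n_gt1) isT.
  exact: leq_ltn_trans (leq0n r) (ltn_ord r).
have [D_le1|D_gt1] := leqP #|D| 1; first by lia.
have C_gt1 : 1 < #|centers D| by rewrite card_centers.
have conn r : induces_connected (G4del D) (row_support A r).
  have [empty|] := eqVneq (row_support A r) set0; last exact: connA.
  by move=> x y; rewrite empty inE.
rewrite -card_centers; apply: leq_trans (subset_leq_card (transitions_cover C_gt1 zoA distinct_cols)) _.
apply: leq_trans (card_bigcup_le _) _.
apply: (@leq_trans (\sum_(r < m) 2)).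
  by apply: leq_sum => r _; exact: (card_transitions n_gt2 C_gt1 (conn r)).
by rewrite sum_nat_const card_ord mulnC.
Qed.

Section ParityConnected.
Variables (n : nat) (D : {set 'I_n}).
Hypothesis n_gt1 : 1 < n.

Lemma G4del_succ (u v : 'I_n) : val v = (u + 1) %% n -> G4del D u v.
Proof. by move=> e; rewrite /G4del -e eqxx. Qed.

Lemma G4del_jump (u v : 'I_n) : val v = (u + 2) %% n -> u \notin D -> G4del D u v.
Proof. by move=> e uD; rewrite /G4del -e eqxx uD !orbT. Qed.

Definition parity_class (q : bool) : {set 'I_n} := [set j : 'I_n | odd j == q].

Variables (q : bool) (S : {set 'I_n}).
Hypotheses (parity_sub : parity_class q \subset S) (centers_sub : centers D \subset S).

Let edge_in (u v : 'I_n) : bool := [&& G4del D u v, u \in S & v \in S].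

Let root : 'I_n := Ordinal (leq_ltn_trans (leq_b1 q) n_gt1).

(* Nodes of parity q are reached from the root by steps of 2; a deleted link
   {i, i+2} is bypassed through its center i+1, which lies in S. *)
Lemma parity_reach_root (a : 'I_n) : odd a = q -> connect edge_in root a.
Proof.
have [N] := ubnP (val a); elim: N a => [//|N IH] a a_lt aq.
have [a_lt2|a_ge2] := ltnP (val a) 2.
  have -> : a = root.
    by apply: val_inj; move: aq a_lt2; rewrite /=; case: (val a) => [|[|]] //= <-.
  exact: connect0.
have an := ltn_ord a.
pose b : 'I_n := Ordinal (leq_ltn_trans (leq_subr 2 (val a)) an).
have ab2 : val a = b + 2 by rewrite /= subnK.
have ab : val a = (b + 2) %% n by rewrite modn_small -ab2.
have bq : odd b = q by rewrite -aq ab2 oddD addbF.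
have inS (w : 'I_n) : odd w = q -> w \in S.
  by move=> wq; apply: (subsetP parity_sub); rewrite inE wq.
have aS := inS a aq; have bS := inS b bq.
apply: connect_trans (IH b _ bq) _; first by move: a_lt; rewrite ab2 addn2 !ltnS => /ltnW.
case bD: (b \in D).
- pose c := ordS b.
  have cS : c \in S by apply: (subsetP centers_sub); apply/imsetP; exists b.
  have cb : val c = b + 1 by rewrite /= modn_small; lia.
  apply: (@connect_trans _ _ c); apply: connect1; rewrite /edge_in ?aS ?bS cS !andbT.
  + by apply: G4del_succ; rewrite cb modn_small; lia.
  + by apply: G4del_succ; rewrite cb ab -addnA.
- by apply: connect1; rewrite /edge_in aS bS !andbT; apply: G4del_jump; rewrite ?bD.
Qed.

(* Every node of S of the other parity is adjacent to a node of parity q. *)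
Lemma reach_root (x : 'I_n) : x \in S -> connect edge_in root x.
Proof.
move=> xS; have [xq|xq] := eqVneq (odd x) q; first exact: parity_reach_root.
have xn := ltn_ord x.
have [y [yq yx]] : exists y : 'I_n, odd y = q /\ G4del D y x.
  have [x0|x_gt0] := posnP (val x).
    exists (Ordinal n_gt1); split; first by move: xq; rewrite x0 /=; case: q.
    by rewrite G4del_sym; apply: G4del_succ; rewrite x0 modn_small.
  exists (Ordinal (leq_ltn_trans (leq_subr 1 (val x)) xn)); split.
    by move: xq; rewrite /= -[in odd x](subnK x_gt0) addn1 /=; case: (odd _); case: q.
  by apply: G4del_succ; rewrite /= subnK // modn_small.
have yS : y \in S by apply: (subsetP parity_sub); rewrite inE yq.
apply: connect_trans (parity_reach_root yq) (connect1 _).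
by rewrite /edge_in yS xS yx.
Qed.

Lemma parity_centers_connected : induces_connected (G4del D) S.
Proof.
have sym : connect_sym edge_in.
  apply: sym_connect_sym => u v; rewrite /edge_in G4del_sym.
  by case: (u \in S); case: (v \in S); rewrite ?andbF.
move=> x y xS yS; apply: connect_trans (reach_root yS).
by rewrite sym; apply: reach_root.
Qed.
End ParityConnected.

Local Open Scope ring_scope.

Lemma sum_setU (V : nmodType) (T : finType) (A B : {set T}) (F : T -> V) :
  (forall j, j \in A -> j \in B -> F j = 0) ->
  \sum_(j in A :|: B) F j = \sum_(j in A) F j + \sum_(j in B) F j.
Proof.
move=> F0; rewrite (big_setID A) setUK setDUl setDv set0U.
rewrite [X in _ = _ + X](big_setID A) [X in _ = _ + (X + _)]big1 ?add0r //.
by move=> j /setIP[jB jA]; apply: F0.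
Qed.

Section IndicatorMatrix.
Variables (R : nzRingType) (n : nat).

Definition indicator_mx (sets : seq {set 'I_n}) : 'M[R]_(size sets, n) :=
  \matrix_(r, j) (j \in nth set0 sets r)%:R.

Lemma indicator_measurement (e : rel 'I_n) (sets : seq {set 'I_n}) :
  (forall S, S \in sets -> induces_connected e S) ->
  measurement_matrix e (indicator_mx sets).
Proof.
move=> conn; split=> [r j|r _]; first by rewrite mxE; case: (j \in _); [right|left].
have -> : row_support (indicator_mx sets) r = nth set0 sets r.
  by apply/setP => j; rewrite !inE mxE; case: (j \in _); rewrite ?oner_eq0 ?eqxx.
exact/conn/mem_nth.
Qed.

Lemma indicator_kernel (sets : seq {set 'I_n}) (z : 'cV[R]_n) :
  indicator_mx sets *m z = 0 -> forall S, S \in sets -> \sum_(j in S) z j ord0 = 0.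
Proof.
move=> kernel S /(nthP set0)[r r_lt <-].
transitivity ((indicator_mx sets *m z) (Ordinal r_lt) ord0); last by rewrite kernel mxE.
rewrite mxE big_mkcond; apply: eq_bigr => j _; rewrite mxE.
by case: (j \in _); rewrite ?mul1r ?mul0r.
Qed.
End IndicatorMatrix.

Section Compression.
Variables (R : nzRingType) (n : nat).

Lemma half_index_subproof (j : 'I_n) : (j./2 < uphalf n)%N.
Proof. by rewrite uphalfE; apply: (@half_leq j.+2 n.+1); exact: ltn_ord. Qed.

Definition half_index (j : 'I_n) : 'I_(uphalf n) := Ordinal (half_index_subproof j).

Lemma half_index_inj (i j : 'I_n) :
  odd i = odd j -> half_index i = half_index j -> i = j.
Proof.
move=> oij /(congr1 val) /= hij; apply: val_inj => /=.
by rewrite -(odd_double_half i) -(odd_double_half j) oij hij.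
Qed.

(* The entries of x on the nodes of parity q, as a vector of length
   ceil(n/2) (the unused last index, if any, gets an empty sum). *)
Definition compress (q : bool) (x : 'cV[R]_n) : 'cV[R]_(uphalf n) :=
  \col_t \sum_(j : 'I_n | (odd j == q) && (half_index j == t)) x j ord0.

Lemma compressB q (x1 x2 : 'cV[R]_n) :
  compress q (x1 - x2) = compress q x1 - compress q x2.
Proof.
by apply/matrixP => t i; rewrite !mxE -sumrB; apply: eq_bigr => j _; rewrite !mxE.
Qed.

Lemma compress_sparse k q (x : 'cV[R]_n) : ksparse k x -> ksparse k (compress q x).
Proof.
rewrite /ksparse => x_sparse; apply: leq_trans x_sparse.
apply: leq_trans (leq_imset_card half_index _); apply: subset_leq_card.
apply/subsetP => t; rewrite inE mxE => nz; apply/imsetP.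
case: (pickP (fun j => (x j ord0 != 0) && (half_index j == t))) => [j /andP[xj /eqP <-]|none].
  by exists j; rewrite ?inE.
case/negP: nz; apply/eqP; apply: big1 => j /andP[_ jt].
by move: (none j); rewrite jt andbT => /negbFE/eqP.
Qed.

Lemma compress_entry (x : 'cV[R]_n) j : x j ord0 = compress (odd j) x (half_index j) ord0.
Proof.
rewrite mxE (big_pred1 j) // => i; apply/idP/idP; last by move/eqP ->; rewrite !eqxx.
by case/andP => /eqP oij /eqP hij; apply/eqP; apply: half_index_inj.
Qed.

Lemma compress_inj (x1 x2 : 'cV[R]_n) :
  (forall q, compress q x1 = compress q x2) -> x1 = x2.
Proof.
move=> same; apply/matrixP => j i; rewrite (ord1 i).
by rewrite (compress_entry x1) (compress_entry x2) same.
Qed.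

Variables (m : nat) (B : 'M[R]_(m, uphalf n)).

Definition test_set (q : bool) (t : 'I_m) : {set 'I_n} :=
  [set j : 'I_n | (odd j == q) && (B t (half_index j) == 1)].

Lemma mul_compress q (x : 'cV[R]_n) t : zero_one B ->
  (B *m compress q x) t ord0 = \sum_(j in test_set q t) x j ord0.
Proof.
move=> zoB; transitivity (\sum_(j : 'I_n | odd j == q) B t (half_index j) * x j ord0).
  rewrite mxE [RHS](partition_big half_index predT) //=; apply: eq_bigr => t' _.
  by rewrite mxE mulr_sumr; apply: eq_bigr => j /andP[_ /eqP ->].
rewrite big_mkcond [RHS]big_mkcond; apply: eq_bigr => j _; rewrite inE.
case: (odd j == q) => //=.
by case: (zoB t (half_index j)) => ->; rewrite ?mul0r ?mul1r ?eqxx // eq_sym oner_eq0.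
Qed.
End Compression.

Section UpperConstruction.
Variables (R : nzRingType) (n : nat) (D : {set 'I_n}) (k m : nat).
Variable B : 'M[R]_(m, uphalf n).
Hypotheses (n_gt1 : (1 < n)%N) (zoB : zero_one B) (idB : identifies k B).

(* Both parity-based row families contain the other parity class and all
   centers, which makes them connected. *)
Definition base_set (q : bool) : {set 'I_n} := parity_class n (~~ q) :|: centers D.

Definition measurement_sets : seq {set 'I_n} :=
  [seq base_set q :|: test_set B q t | q <- [:: false; true], t <- enum 'I_m]
  ++ [seq base_set q | q <- [:: false; true]] ++ [seq [set c] | c <- enum (centers D)].

Lemma size_measurement_sets : size measurement_sets = (2 * m + #|D| + 2)%N.
Proof.
rewrite size_cat size_allpairs !size_map size_cat !size_map -enumT size_enum_ord -cardE card_centers /=.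
by rewrite [(2 + _)%N]addnC addnA.
Qed.

Lemma measurement_sets_connected S :
  S \in measurement_sets -> induces_connected (G4del D) S.
Proof.
have base_conn q (S' : {set 'I_n}) : base_set q \subset S' -> induces_connected (G4del D) S'.
  move=> /subsetP base_sub; apply: (@parity_centers_connected _ _ n_gt1 (~~ q)).
    by apply/subsetP => j j_par; apply: base_sub; rewrite inE j_par.
  by apply/subsetP => j jC; apply: base_sub; rewrite inE jC orbT.
rewrite mem_cat => /orP[/allpairsP[[q t] [_ _ ->]]|]; last rewrite mem_cat => /orP[/mapP[q _ ->]|/mapP[c _ ->]].
- by apply: (base_conn q); rewrite subsetUl.
- exact: (base_conn q).
- by move=> x y; rewrite !inE => /eqP -> /eqP ->; exact: connect0.
Qed.

(* The construction identifies k-sparse vectors: for z = x1 - x2 in the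
   kernel, the singleton rows kill z on the centers, so each base + test row
   minus its base row gives B applied to the compressions of z. *)
Lemma measurement_sets_identify : identifies k (indicator_mx R measurement_sets).
Proof.
move=> x1 x2 x1_sparse x2_sparse x12; apply: contraNneq x12 => same_meas.
pose z := x1 - x2.
have kernel : indicator_mx R measurement_sets *m z = 0 by rewrite mulmxBr same_meas subrr.
have mass0 := indicator_kernel kernel.
have z_centers c : c \in centers D -> z c ord0 = 0.
  move=> cC; have := mass0 [set c]; rewrite big_set1; apply.
  by rewrite !mem_cat map_f ?mem_enum ?orbT.
have z_test q t : \sum_(j in test_set B q t) z j ord0 = 0.
  have base_in : base_set q \in measurement_sets.
    by rewrite mem_cat orbC mem_cat map_f //; case: q.
  have union_in : base_set q :|: test_set B q t \in measurement_sets.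
    by rewrite mem_cat; apply/orP; left; apply/allpairsP; exists (q, t); rewrite /= mem_enum; case: (q).
  have := mass0 _ union_in; rewrite sum_setU; first by rewrite (mass0 _ base_in) add0r.
  move=> j; rewrite !inE => /orP[parity|jC] /andP[/eqP jq _]; last exact: z_centers.
  by move: parity; rewrite jq; case: q {jq base_in union_in}.
have compress_eq q : compress q x1 = compress q x2.
  have meas_eq : B *m compress q x1 = B *m compress q x2.
    apply/eqP; rewrite -subr_eq0 -mulmxBr -compressB; apply/eqP/matrixP => t i.
    by rewrite (ord1 i) mul_compress // z_test mxE.
  apply/eqP; apply: contraT => neq.
  by move: (idB (compress_sparse q x1_sparse) (compress_sparse q x2_sparse) neq); rewrite meas_eq eqxx.
by apply/eqP; exact: compress_inj.
Qed.

Lemma upper_bound : (MG R (G4del D) k <= 2 * m + #|D| + 2)%N.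
Proof.
rewrite /MG; case: ex_minnP => m0 _ minimal; rewrite -size_measurement_sets.
apply: minimal; apply: bool_ofT; exists (indicator_mx R measurement_sets); split.
  exact/indicator_measurement/measurement_sets_connected.
exact: measurement_sets_identify.
Qed.
End UpperConstruction.

Lemma bool_ofP (P : Prop) : bool_of P -> P.
Proof. by rewrite /bool_of; case: excluded_middle_informative. Qed.

Lemma MG_lower (R : nzRingType) n (D : {set 'I_n}) k :
  (2 < n)%N -> (0 < k)%N -> (#|D| <= 2 * MG R (G4del D) k)%N.
Proof.
move=> n_gt2 k_gt0; rewrite /MG; case: ex_minnP => m /bool_ofP[A [measA idA]] _.
exact: lower_bound measA idA.
Qed.

Lemma MC_witness (R : nzRingType) k N :
  exists B : 'M[R]_(MC R k N, N), zero_one B /\ identifies k B.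
Proof. by rewrite /MC; case: ex_minnP => m /bool_ofP. Qed.

Lemma uphalf_le_double (a b : nat) : (a <= 2 * b)%N -> (uphalf a <= b)%N.
Proof.
move=> a_le; apply: (@leq_trans (uphalf b.*2)); last by rewrite uphalf_double.
by rewrite !uphalfE half_leq // ltnS -mul2n.
Qed.

Theorem theorem4 (R : realFieldType) (n k h : nat) (D : {set 'I_n}) :
  (5 <= n)%N -> (1 <= k)%N -> (h <= n)%N -> #|D| = h ->
  (uphalf h <= MG R (G4del D) k)%N /\
  (MG R (G4del D) k <= 2 * MC R k (uphalf n) + h + 2)%N.
Proof.
move=> n_ge5 k_ge1 _ <-; have n_gt2 : (2 < n)%N by lia.
split.
- exact/uphalf_le_double/MG_lower.
- have [B [zoB idB]] := MC_witness R k (uphalf n).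
  exact: upper_bound (ltnW n_gt2) zoB idB.
Qed.
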